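(* Let $G$ be a simple plane graph on $n\geq 2$ vertices that contains neither $K_4$ nor $C_6$ as a subgraph, and such that every maximal $2$-connected subgraph of $G$ has at most $5$ vertices. Then $e(G)\leq \frac{31}{15}n-\frac{7}{3}$.
   Context: $K_4$ is the complete graph on $4$ vertices, $C_6$ the cycle on $6$ vertices; $e(G)$ is the number of edges of $G$. A maximal $2$-connected subgraph (a block) is understood in the usual sense, where a single edge (bridge) counts as a block on $2$ vertices. *)

(* A finite simple graph is a symmetric irreflexive
   relation g : rel T on a finType T (vertex set = T). *)
From mathcomp Require Import all_boot all_order all_algebra.
Set Implicit Arguments. Unset Strict Implicit. Unset Printing Implicit Defensive.

Section Graphs.
Variable T : finType.
Variable g : rel T.

Definition edges : {set {set T}} :=
  [set E : {set T} | [exists u, exists v, g u v && (E == [set u; v])]].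

Definition nedges : nat := #|edges|.

Definition has_K4 : Prop :=
  exists f : 'I_4 -> T, injective f /\ forall i j : 'I_4, i != j -> g (f i) (f j).

Definition has_C6 : Prop :=
  exists f : 'I_6 -> T, injective f /\
    forall i : 'I_6, g (f i) (f (inZp i.+1)).

Definition induced_connected (S : {set T}) : Prop :=
  {in S &, forall x y, connect [rel a b | (a \in S) && (b \in S) && g a b] x y}.

(* the subgraph induced on S is 2-connected, where (as in the paper) a single
   edge (bridge) counts as 2-connected on 2 vertices: at least 2 vertices,
   connected, and connected after deleting any single vertex *)
Definition two_connected (S : {set T}) : Prop :=
  2 <= #|S| /\ induced_connected S /\ forall v, v \in S -> induced_connected (S :\ v).

Definition is_block (S : {set T}) : Prop :=
  two_connected S /\ forall S' : {set T}, S \subset S' -> two_connected S' -> S' = S.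

Definition rotation_system (rho : T -> T -> T) : Prop :=
  forall v,
    {in [pred u | g v u], forall u, g v (rho v u)} /\
    {in [pred u | g v u] &, injective (rho v)} /\
    {in [pred u | g v u] &, forall u w, exists k, iter k (rho v) u = w}.

Definition is_dart (d : T * T) : bool := g d.1 d.2.

Definition face_map (rho : T -> T -> T) (d : T * T) : T * T :=
  if is_dart d then (d.2, rho d.2 d.1) else d.

Definition nfaces (rho : T -> T -> T) : nat := n_comp (frel (face_map rho)) is_dart.

Definition ncomponents : nat := n_comp g [pred x : T | true].
Definition nisolated : nat := #|[set v : T | [forall u, ~~ g v u]]|.
Definition ndarts : nat := #|[pred d : T * T | is_dart d]|.

(* G is planar iff it has a rotation system of genus 0 on every component:
   V - E + F = 2 * (#components with an edge) + #isolated vertices,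
   i.e. 2V + 2F + 2*iso = 4*comp + #darts (#darts = 2E). *)
Definition planar : Prop :=
  exists rho, rotation_system rho /\
    2 * (#|T| + nfaces rho + nisolated) = 4 * ncomponents + ndarts.

End Graphs.

(* A K4-free graph on k vertices misses at least k - 3 pairs, so a block on
   k <= 5 vertices has at most 2k - 2 edges.  Cutting a graph at a cut vertex
   (or between components) splits it into two parts sharing at most one vertex
   and covering every edge, so by induction e(G) <= 2n - 2.  This is below
   31n/15 - 7/3 as soon as n >= 5, and for n <= 4 the K4 bound alone suffices. *)
From mathcomp Require Import all_boot all_order all_algebra.
From mathcomp Require Import zify lra.
From Stdlib Require Import Classical.
Import GRing.Theory Num.Theory.

Set Implicit Arguments. Unset Strict Implicit. Unset Printing Implicit Defensive.

Section EdgeCounting.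

Variables (T : finType) (g : rel T).
Implicit Types S V W A B : {set T}.

Definition pairs_in (V : {set T}) : {set {set T}} :=
  [set A : {set T} | A \subset V & #|A| == 2].

Definition edges_in (V : {set T}) := pairs_in V :&: edges g.

Definition nonedges_in (V : {set T}) := pairs_in V :\: edges g.

Definition induced (W : {set T}) : rel T :=
  [rel a b | (a \in W) && (b \in W) && g a b].

Lemma edgesP E : reflect (exists u v, g u v /\ E = [set u; v]) (E \in edges g).
Proof.
rewrite inE; apply: (iffP existsP) => [[u /existsP [v /andP [guv /eqP ->]]]|].
  by exists u, v.
by move=> [u [v [guv ->]]]; exists u; apply/existsP; exists v; rewrite guv eqxx.
Qed.

Lemma card_edges_in V : #|edges_in V| + #|nonedges_in V| = 'C(#|V|, 2).
Proof. by rewrite cardsID cards_draws. Qed.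

Lemma nedges_edges_inT : irreflexive g -> nedges g = #|edges_in [set: T]|.
Proof.
move=> irr; apply: eq_card => E; rewrite in_setI andbC.
case: edgesP => [[u [v [guv ->]]]|] //=; rewrite inE subsetT cards2 /=.
by case: (u =P v) guv => [->|]; rewrite ?irr.
Qed.

Lemma nonedge_in_nonedges V p q :
  symmetric g -> p \in V -> q \in V -> p != q -> ~~ g p q ->
  [set p; q] \in nonedges_in V.
Proof.
move=> sym pV qV npq ngpq; rewrite in_setD; apply/andP; split.
  apply/edgesP => -[u [v [guv /setP e]]]; move: (e p) (e q).
  rewrite !inE !eqxx ?orbT => /esym/orP [] /eqP Ep /esym/orP [] /eqP Eq; subst;
  first [by rewrite eqxx in npq | by rewrite guv in ngpq | by rewrite sym guv in ngpq].
rewrite inE cards2 npq andbT.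
by apply/subsetP => x; rewrite !inE => /orP [] /eqP ->.
Qed.

Lemma K4_free_nonadjacent W : ~ has_K4 g -> 4 <= #|W| ->
  exists p q, [/\ p \in W, q \in W, p != q & ~~ g p q].
Proof.
move=> noK4 le4W; apply: NNPP => noPair; apply: noK4.
exists (fun i : 'I_4 => enum_val (widen_ord le4W i)); split.
  by move=> i j /enum_val_inj [] /ord_inj.
move=> i j nij; apply/negPn/negP => ng; apply: noPair.
exists (enum_val (widen_ord le4W i)), (enum_val (widen_ord le4W j)).
split; rewrite ?enum_valP //.
by apply: contra nij => /eqP /enum_val_inj [] /ord_inj ->.
Qed.

(* Removing one endpoint of a non-adjacent pair loses at least that pair. *)
Lemma nonedges_in_K4_free V : symmetric g -> ~ has_K4 g ->
  #|V| - 3 <= #|nonedges_in V|.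
Proof.
move=> sym noK4; have [n] := ubnP #|V|; elim: n V => // n IH V /ltnSE leVn.
have [le4V|] := leqP 4 #|V|; last by rewrite ltnS -subn_eq0 => /eqP ->.
have [p [q [pV qV npq ngpq]]] := K4_free_nonadjacent noK4 le4V.
have cardVp : #|V :\ p| = #|V| - 1 by rewrite (cardsD1 p V) pV add1n subn1.
have sub : nonedges_in (V :\ p) \proper nonedges_in V.
  apply/properP; split.
    apply/subsetP => A; rewrite !inE => /andP [-> /andP [sAVp ->]] /=.
    by rewrite (subset_trans sAVp) ?subsetDl.
  exists [set p; q]; first exact: nonedge_in_nonedges.
  by rewrite !inE; apply/nandP; right; apply/nandP; left;
     apply/subsetPn; exists p; rewrite !inE ?eqxx.
have /IH : #|V :\ p| < n by rewrite cardVp; lia.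
by have := proper_card sub; lia.
Qed.

Lemma nedges_in_K4_free V : symmetric g -> ~ has_K4 g ->
  #|edges_in V| + (#|V| - 3) <= 'C(#|V|, 2).
Proof.
by move=> sym noK4; rewrite -card_edges_in leq_add2l nonedges_in_K4_free.
Qed.

Lemma card_edges_in_cover V A B :
  (forall u v, g u v -> u \in V -> v \in V ->
     (u \in A) && (v \in A) || (u \in B) && (v \in B)) ->
  #|edges_in V| <= #|edges_in A| + #|edges_in B|.
Proof.
move=> cover; apply: leq_trans (leq_card_setU _ _); apply: subset_leq_card.
apply/subsetP => E; rewrite in_setI => /andP [PE /[dup] EE /edgesP [u [v [guv eE]]]].
move: PE; rewrite in_setU !in_setI EE !andbT /pairs_in !inE eE cards2.
rewrite !subUset !sub1set => /andP [/andP [uV vV] ->].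
by case/orP: (cover u v guv uV vV) => /andP [-> ->]; rewrite ?orbT.
Qed.

Definition separation V W y z :=
  [/\ W \subset V, #|V :\: W| <= 1, y \in W, z \in W & ~~ connect (induced W) y z].

Lemma two_connected_or_separation V : 2 <= #|V| ->
  two_connected g V \/ exists W y z, separation V W y z.
Proof.
move=> le2V; apply: NNPP => /not_or_and [not2c nosep]; apply: not2c.
have conn W : W \subset V -> #|V :\: W| <= 1 -> induced_connected g W.
  move=> sWV le1 x y xW yW; apply/negPn/negP => nxy; apply: nosep.
  by exists W, x, y.
split=> //; split; first by apply: conn; rewrite ?setDv ?cards0.
move=> v vV; apply: conn; first exact: subsetDl.
rewrite -(cards1 v); apply: subset_leq_card; apply/subsetP => u.
by rewrite !inE; case: eqP; case: (u \in V).
Qed.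

Lemma separation_split V W y z : symmetric g -> separation V W y z ->
  exists A B, [/\ 0 < #|A| < #|V|, 0 < #|B| < #|V|, #|A| + #|B| <= #|V|.+1
                & #|edges_in V| <= #|edges_in A| + #|edges_in B|].
Proof.
move=> sym [sWV leVW yW zW nyz].
set C := [set u in W | connect (induced W) y u].
have sCW : C \subset W by apply/subsetP => u; rewrite inE => /andP [].
have sCV := subset_trans sCW sWV.
have yC : y \in C by rewrite inE yW connect0.
have zC : z \notin C by rewrite inE zW.
have closedC u v : u \in C -> v \in W -> g u v -> v \in C.
  rewrite !inE => /andP [uW yu] vW guv; rewrite vW.
  by apply: (connect_trans yu); apply: connect1; rewrite /induced /= uW vW.
exists (C :|: (V :\: W)), (V :\: C); split.
- rewrite card_gt0; apply/andP; split.
    by apply/set0Pn; exists y; rewrite inE yC.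
  apply: proper_card; apply/properP; split; first by rewrite subUset sCV subsetDl.
  by exists z; rewrite ?(subsetP sWV) // in_setU in_setD zW (negbTE zC).
- rewrite card_gt0; apply/andP; split.
    by apply/set0Pn; exists z; rewrite inE zC (subsetP sWV).
  apply: proper_card; apply/properP; split; first exact: subsetDl.
  by exists y; rewrite ?(subsetP sWV) // inE yC.
- rewrite cardsD (setIidPr sCV); have := subset_leq_card sCV.
  have := (leq_card_setU C (V :\: W)).1; lia.
apply: card_edges_in_cover => u v guv uV vV.
rewrite !in_setU !in_setD uV vV !andbT.
have [uC|uC] := boolP (u \in C); have [vC|vC] := boolP (v \in C) => //=;
  rewrite ?orbF ?andbT ?orbT //.
- by apply: contra vC => vW; apply: closedC uC vW guv.
- by apply: contra uC => uW; apply: closedC vC uW _; rewrite sym.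
Qed.

Lemma two_connected_sub_block S : two_connected g S ->
  exists2 B : {set T}, S \subset B & is_block g B.
Proof.
have [n] := ubnP #|~: S|; elim: n S => // n IH S /ltnSE leSn tS.
have [bS|nbS] := classic (is_block g S); first by exists S.
have [S' [sSS' tS' neS'S]] : exists S', [/\ S \subset S', two_connected g S' & S' != S].
  apply: NNPP => noS'; apply: nbS; split=> // S' sSS' tS'; apply/eqP/negPn/negP => ne.
  by apply: noS'; exists S'.
have ltSS' : S \proper S' by rewrite properEneq sSS' andbT eq_sym.
have [|B sS'B bB] := IH S' _ tS'; last by exists B; first exact: subset_trans sS'B.
by apply: leq_trans leSn; apply: proper_card; rewrite properC.
Qed.

Section BlockBounded.

Hypotheses (sym : symmetric g) (noK4 : ~ has_K4 g).
Hypothesis small_blocks : forall S, is_block g S -> #|S| <= 5.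

Lemma nedges_in_small V : 0 < #|V| <= 5 -> #|edges_in V| + 2 <= 2 * #|V|.
Proof.
have := nedges_in_K4_free V sym noK4.
rewrite bin2; case: #|V| => [|[|[|[|[|[|k]]]]]] //=; lia.
Qed.

Lemma nedges_in_le_double V : 0 < #|V| -> #|edges_in V| + 2 <= 2 * #|V|.
Proof.
have [n] := ubnP #|V|; elim: n V => // n IH V /ltnSE leVn V0.
have [le1V|le2V] := leqP #|V| 1; first by apply: nedges_in_small; rewrite V0; lia.
have [tV|[W [y [z sep]]]] := two_connected_or_separation le2V.
  have [B sVB bB] := two_connected_sub_block tV.
  apply: nedges_in_small; rewrite V0 /=.
  exact: leq_trans (subset_leq_card sVB) (small_blocks bB).
have [A [B [/andP [A0 ltAV] /andP [B0 ltBV] leAB cover]]] := separation_split sym sep.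
have := IH A (leq_trans ltAV leVn) A0; have := IH B (leq_trans ltBV leVn) B0.
lia.
Qed.

End BlockBounded.

End EdgeCounting.

Local Open Scope ring_scope.

Theorem corollary4 (T : finType) (g : rel T) :
  symmetric g -> irreflexive g ->
  planar g ->
  (2 <= #|T|)%N ->
  ~ has_K4 g -> ~ has_C6 g ->
  (forall S : {set T}, is_block g S -> (#|S| <= 5)%N) ->
  (nedges g)%:R <= (31%:R / 15%:R : rat) * (#|T|)%:R - 7%:R / 3%:R.
Proof.
move=> sym irr _ le2T noK4 _ small_blocks.
have T0 : (0 < #|[set: T]|)%N by rewrite cardsT; lia.
have double := nedges_in_le_double sym noK4 small_blocks T0.
have K4_free := nedges_in_K4_free [set: T] sym noK4.
rewrite -nedges_edges_inT // cardsT in double K4_free.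
have bound : (15 * nedges g + 35 <= 31 * #|T|)%N.
  have [le5T|] := leqP 5 #|T|; first lia.
  by move: K4_free le2T; rewrite bin2; case: #|T| => [|[|[|[|[|[|k]]]]]] //=; lia.
have := bound; rewrite -(ler_nat rat) natrD !natrM; lra.
Qed.
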